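(* Under the hypotheses of Lemma 1 (finite multi-set $\mathcal X=\{X_1,\dots,X_n\}$ of real symmetric $2\times2$ matrices, $\lambda_1$ the unique largest eigenvalue of $\mathcal X$, belonging to $X_1$, with $u_1=e_1$, $v_1=e_2$), the largest eigenvalue of $\frac1m\log E_m$, where $E_m=\sum_{i=1}^n\exp(mX_i)$, converges to $\lambda_1$ as $m\to\infty$. Consequently $e_1$ is an eigenvector of $S=\lim_{m\to\infty}\frac1m\log E_m$ with eigenvalue $\lambda_1$.
   Context: $\exp$ and $\log$ denote the matrix exponential and the matrix logarithm of a symmetric positive definite matrix. Every real symmetric $2\times2$ matrix $X_i$ is written in spectral form $X_i=\lambda_i u_iu_i^{\mathsf T}+\mu_i v_iv_i^{\mathsf T}$ with $\lambda_i\ge\mu_i$, $u_i=(\cos\varphi_i,\sin\varphi_i)^{\mathsf T}$, $v_i=(-\sin\varphi_i,\cos\varphi_i)^{\mathsf T}$, $\varphi_i\in[-\pi/2,\pi/2]$. ''The eigenvalues of $\mathcal X$'' means the multi-set of all $2n$ numbers $\lambda_1,\mu_1,\dots,\lambda_n,\mu_n$; an eigenvalue is unique if it occurs exactly once in this multi-set. $e_1=(1,0)^{\mathsf T}$, $e_2=(0,1)^{\mathsf T}$. *)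

From HB Require Import structures.
From mathcomp Require Import all_boot all_order all_algebra.
From mathcomp Require Import all_classical all_reals all_analysis.
Set Implicit Arguments. Unset Strict Implicit. Unset Printing Implicit Defensive.
Import Order.TTheory GRing.Theory Num.Theory numFieldNormedType.Exports.
Local Open Scope ring_scope.
Local Open Scope classical_set_scope.

Section Defs.
Variable R : realType.

Definition expm (A : 'M[R]_2) : 'M[R]_2 :=
  \matrix_(i, j) limn (fun N : nat => (\sum_(k < N) (k`!%:R)^-1 *: A ^+ k) i j).

Definition logm (E : 'M[R]_2) : 'M[R]_2 :=
  xget 0 [set L : 'M[R]_2 | L^T = L /\ expm L = E].

Definition lmax (A : 'M[R]_2) : R := sup [set a : R | eigenvalue A a].

Definition e1 : 'cV[R]_2 := \col_i (i == 0 :> 'I_2)%:R.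
Definition e2 : 'cV[R]_2 := \col_i (i == 1 :> 'I_2)%:R.

Definition uvec (phi : R) : 'cV[R]_2 := \col_i (if i == 0 :> 'I_2 then cos phi else sin phi).
Definition vvec (phi : R) : 'cV[R]_2 := \col_i (if i == 0 :> 'I_2 then - sin phi else cos phi).

Definition spec2 (lam mu phi : R) : 'M[R]_2 :=
  lam *: (uvec phi *m (uvec phi)^T) + mu *: (vvec phi *m (vvec phi)^T).

Definition Em (n : nat) (X : 'I_n -> 'M[R]_2) (m : nat) : 'M[R]_2 :=
  \sum_(i < n) expm (m%:R *: X i).

End Defs.

(* Every real symmetric 2x2 matrix is a P + b Q with P, Q the orthogonal projections onto
   (c, s) and (-s, c), a >= b; exp and log act on a and b alone. Fix lsub < lam_1 bounding
   every other eigenvalue of the X_i. Since u_1 = e1, E_m is diag(e^(m lam_1), e^(m mu_1))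
   plus a matrix with entries O(e^(m lsub)). Writing E_m = e^a P + e^b Q, the bounds
   E_m[0,0] >= e^(m lam_1) and tr E_m <= (1 + 2K) e^(m lam_1), K = 2n + 1, pin a between
   m lam_1 and m lam_1 + ln (1 + 2K), so a/m -> lam_1. Against the gap e^a - e^b >= e^(m lam_1) / 2,
   the small entries E_m[1,1] and E_m[1,0] force s^2 and |c s| to be O(rho^m) with
   rho = e^(lsub - lam_1) < 1; hence the first column of (1/m) log E_m = (a/m) P + (b/m) Q
   tends to lam_1 e1. *)

From HB Require Import structures.
From mathcomp Require Import all_boot all_order all_algebra.
From mathcomp Require Import all_classical all_reals all_analysis.
From mathcomp Require Import ring lra.

Set Implicit Arguments.
Unset Strict Implicit.
Unset Printing Implicit Defensive.

Import Order.TTheory GRing.Theory Num.Theory numFieldNormedType.Exports.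
Local Open Scope ring_scope.

Lemma ord2P (i : 'I_2) : i = 0 \/ i = 1.
Proof. by case: i => [[|[|k]] ik]; [left | right | by []]; apply: val_inj. Qed.

Lemma matrix2P (T : Type) (A B : 'M[T]_2) :
  A 0 0 = B 0 0 -> A 0 1 = B 0 1 -> A 1 0 = B 1 0 -> A 1 1 = B 1 1 -> A = B.
Proof.
move=> e00 e01 e10 e11; apply/matrixP => i j.
by case: (ord2P i) => ->; case: (ord2P j) => ->.
Qed.

Lemma mulmx2E (R : pzSemiRingType) m n (A : 'M[R]_(m, 2)) (B : 'M[R]_(2, n)) i j :
  (A *m B) i j = A i 0 * B 0 j + A i 1 * B 1 j.
Proof.
by rewrite mxE big_ord_recl big_ord1; have -> : lift ord0 (@ord0 0) = 1 by apply: val_inj.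
Qed.

(* [ring] modulo the relation [w = v], with cofactor [z] *)
Lemma eq_lincomb (R : pzRingType) {x y : R} (z : R) {w v : R} :
  w = v -> x - y = z * (w - v) -> x = y.
Proof. by move=> ->; rewrite subrr mulr0 => /subr0_eq. Qed.
Arguments eq_lincomb {R x y} z {w v}.

Section SpectralForm.
Variable R : comNzRingType.
Implicit Types a b c s : R.

Definition cvec2 c s : 'cV[R]_2 := \col_i (if i == 0 then c else s).

Definition sform a b c s : 'M[R]_2 :=
  a *: (cvec2 c s *m (cvec2 c s)^T) + b *: (cvec2 (- s) c *m (cvec2 (- s) c)^T).

Lemma sform_entry a b c s i j : sform a b c s i j =
  a * (cvec2 c s i 0 * cvec2 c s j 0) + b * (cvec2 (- s) c i 0 * cvec2 (- s) c j 0).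
Proof. by rewrite !mxE !big_ord1 !mxE. Qed.

Lemma sform00 a b c s : sform a b c s 0 0 = a * c ^+ 2 + b * s ^+ 2.
Proof. by rewrite sform_entry !mxE /=; ring. Qed.

Lemma sform01 a b c s : sform a b c s 0 1 = (a - b) * (c * s).
Proof. by rewrite sform_entry !mxE /=; ring. Qed.

Lemma sform10 a b c s : sform a b c s 1 0 = (a - b) * (c * s).
Proof. by rewrite sform_entry !mxE /=; ring. Qed.

Lemma sform11 a b c s : sform a b c s 1 1 = a * s ^+ 2 + b * c ^+ 2.
Proof. by rewrite sform_entry !mxE /=; ring. Qed.

Definition sformE := (sform00, sform01, sform10, sform11).

Lemma trmx_sform a b c s : (sform a b c s)^T = sform a b c s.
Proof. by apply: matrix2P; rewrite mxE // !sformE. Qed.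

Lemma scale_sform k a b c s : k *: sform a b c s = sform (k * a) (k * b) c s.
Proof. by rewrite /sform scalerDr !scalerA. Qed.

Definition qform (M : 'M[R]_2) (w0 w1 : R) :=
  w0 ^+ 2 * M 0 0 + w0 * w1 * (M 0 1 + M 1 0) + w1 ^+ 2 * M 1 1.

Lemma qform_sform a b c s w0 w1 :
  qform (sform a b c s) w0 w1 = a * (c * w0 + s * w1) ^+ 2 + b * (- s * w0 + c * w1) ^+ 2.
Proof. by rewrite /qform !sformE; ring. Qed.

Lemma qform10 (M : 'M[R]_2) : qform M 1 0 = M 0 0.
Proof. by rewrite /qform; ring. Qed.

Lemma qform_sum (I : finType) (F : I -> 'M[R]_2) w0 w1 :
  qform (\sum_i F i) w0 w1 = \sum_i qform (F i) w0 w1.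
Proof. by rewrite /qform !summxE !big_split /= -!mulr_sumr big_split. Qed.

Variables c s : R.
Hypothesis cs1 : c ^+ 2 + s ^+ 2 = 1.

Let mul_cs1 x : x = x * (c ^+ 2 + s ^+ 2). Proof. by rewrite cs1 mulr1. Qed.

Lemma sformM a b a' b' : sform a b c s * sform a' b' c s = sform (a * a') (b * b') c s.
Proof.
by rewrite -mulmxE; apply: matrix2P; rewrite mulmx2E !sformE [RHS]mul_cs1; ring.
Qed.

Lemma sform_eq1 : sform 1 1 c s = 1.
Proof. by apply: matrix2P; rewrite !sformE !mxE /= ?subrr ?mul0r // !mul1r // addrC. Qed.

Lemma sformX a b k : sform a b c s ^+ k = sform (a ^+ k) (b ^+ k) c s.
Proof.
elim: k => [|k IH]; first by rewrite !expr0 sform_eq1.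
by rewrite exprS IH sformM -!exprS.
Qed.

Lemma sform_trace a b : sform a b c s 0 0 + sform a b c s 1 1 = a + b.
Proof. by rewrite !sformE [RHS]mul_cs1; ring. Qed.

Lemma qform_sform_eigvec1 a b : qform (sform a b c s) c s = a.
Proof. by rewrite qform_sform -!expr2 cs1; ring. Qed.

Lemma qform_sform_eigvec2 a b : qform (sform a b c s) (- s) c = b.
Proof. by rewrite qform_sform mulrNN -!expr2 [s ^+ 2 + _]addrC cs1; ring. Qed.

End SpectralForm.

Section OrderedSpectralForm.
Variable R : realFieldType.
Implicit Types a b c s : R.

Lemma sform_norm_le a b c s i j : c ^+ 2 + s ^+ 2 = 1 -> 0 <= a -> 0 <= b ->
  `|sform a b c s i j| <= a + b.
Proof.
move=> cs1 a0 b0; have c2 := sqr_ge0 c; have s2 := sqr_ge0 s.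
have c2_le1 : c ^+ 2 <= 1 by lra.
have s2_le1 : s ^+ 2 <= 1 by lra.
have cs_le1 : `|c * s| <= 1.
  by have := sqr_ge0 (c + s); have := sqr_ge0 (c - s); rewrite ler_norml; nra.
have ab : `|a - b| <= a + b by rewrite ler_norml; lra.
case: (ord2P i) => ->; case: (ord2P j) => ->; rewrite !sformE.
- rewrite ger0_norm ?(addr_ge0 (mulr_ge0 a0 c2) (mulr_ge0 b0 s2)) //.
  exact: lerD (ler_piMr a0 c2_le1) (ler_piMr b0 s2_le1).
- by rewrite normrM -[a + b]mulr1; apply: ler_pM.
- by rewrite normrM -[a + b]mulr1; apply: ler_pM.
- rewrite ger0_norm ?(addr_ge0 (mulr_ge0 a0 s2) (mulr_ge0 b0 c2)) //.
  exact: lerD (ler_piMr a0 s2_le1) (ler_piMr b0 c2_le1).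
Qed.

Lemma qform_sform_ge0 a b c s w0 w1 : 0 <= a -> 0 <= b -> 0 <= qform (sform a b c s) w0 w1.
Proof. by move=> a0 b0; rewrite qform_sform addr_ge0 // mulr_ge0 // sqr_ge0. Qed.

End OrderedSpectralForm.

Lemma spec2_sform (R : realType) (l m p : R) : spec2 l m p = sform l m (cos p) (sin p).
Proof. by []. Qed.

Lemma sym2_sform (R : rcfType) (M : 'M[R]_2) : M 0 1 = M 1 0 ->
  exists a b c s, [/\ c ^+ 2 + s ^+ 2 = 1, b <= a & M = sform a b c s].
Proof.
move=> sym; set p : R := M 0 0; set r : R := M 0 1; set t : R := M 1 1.
have sformP a b c s : p = a * c ^+ 2 + b * s ^+ 2 -> r = (a - b) * (c * s) ->
    t = a * s ^+ 2 + b * c ^+ 2 -> M = sform a b c s.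
  by move=> ep er et; apply: matrix2P; rewrite !sformE -?sym.
have [r0|r0] := eqVneq r 0.
  have [tp|pt] := lerP t p.
    exists p, t, 1, 0; split; rewrite ?expr1n ?expr0n ?addr0 //.
    by apply: sformP; rewrite ?r0; ring.
  exists t, p, 0, 1; split; rewrite ?expr1n ?expr0n ?add0r ?ltW //.
  by apply: sformP; rewrite ?r0; ring.
(* [p + u] is the larger eigenvalue, with eigenvector [(r, u)]. *)
pose D := Num.sqrt ((p - t) ^+ 2 + 4 * r ^+ 2).
have D_ge0 : 0 <= D by exact: sqrtr_ge0.
have D2 : D ^+ 2 = (p - t) ^+ 2 + 4 * r ^+ 2.
  by rewrite sqr_sqrtr // addr_ge0 ?sqr_ge0 // mulr_ge0 // sqr_ge0.
pose u := (t - p + D) / 2.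
have u2 : u ^+ 2 = (t - p) * u + r ^+ 2 by apply: (eq_lincomb 4^-1 D2); rewrite /u; field.
have two_u : 2 * u = t - p + D by rewrite /u mulrC divfK // pnatr_eq0.
clearbody u.
have r2_gt0 : 0 < r ^+ 2 by rewrite exprn_even_gt0.
pose N2 := r ^+ 2 + u ^+ 2.
have N2_gt0 : 0 < N2 by have := sqr_ge0 u; rewrite /N2; lra.
pose N := Num.sqrt N2.
have NN : N ^+ 2 = N2 by rewrite sqr_sqrtr ?ltW.
have N2_neq0 : N2 != 0 by rewrite gt_eqF.
exists (p + u), (t - u), (r / N), (u / N); split.
- by rewrite !expr_div_n NN -mulrDl -/N2 divff.
- by lra.
apply: sformP; rewrite ?mulf_div -?expr2 ?expr_div_n NN; apply: (mulIf N2_neq0);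
  rewrite ?mulrDl ?mulrA ?divfK //.
- by apply: (eq_lincomb u u2); rewrite /N2; ring.
- by apply: (eq_lincomb (- r) u2); rewrite /N2; ring.
- by apply: (eq_lincomb (- u) u2); rewrite /N2; ring.
Qed.

Section RealSpectralForm.
Variable R : realType.
Implicit Types a b c s : R.

Lemma expm_sform a b c s : c ^+ 2 + s ^+ 2 = 1 ->
  expm (sform a b c s) = sform (expR a) (expR b) c s.
Proof.
move=> cs1; apply/matrixP => i j; rewrite mxE sform_entry.
set P := cvec2 c s i 0 * _; set Q := cvec2 (- s) c i 0 * _.
have -> : (fun N => (\sum_(k < N) (k`!%:R)^-1 *: sform a b c s ^+ k) i j) =
    (fun N => series (exp_coeff a) N * P + series (exp_coeff b) N * Q).
  apply/funext => N; rewrite summxE /series /exp_coeff /= !big_mkord !mulr_suml -big_split /=.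
  by apply: eq_bigr => k _; rewrite sformX // mxE sform_entry -/P -/Q; ring.
apply: cvg_lim => //; apply: cvgD; apply: cvgMr_tmp; exact: is_cvg_series_exp_coeff.
Qed.

Lemma lmax_sform a b c s : c ^+ 2 + s ^+ 2 = 1 -> b <= a -> lmax (sform a b c s) = a.
Proof.
move=> cs1 ba.
have eig_a : eigenvalue (sform a b c s) a.
  apply/eigenvalueP; exists (cvec2 c s)^T.
    apply/rowP => j; case: (ord2P j) => ->; rewrite mulmx2E !sformE !mxE /=.
      by apply: (eq_lincomb (a * c) cs1); ring.
    by apply: (eq_lincomb (a * s) cs1); ring.
  apply/eqP => /rowP v0; move: (v0 0) (v0 1); rewrite !mxE /= => c0 s0.
  by move: cs1; rewrite c0 s0 expr0n addr0 => /eqP; rewrite eq_sym oner_eq0.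
have le_a x : eigenvalue (sform a b c s) x -> x <= a.
  move=> /eigenvalueP [v vx v_neq0].
  have vx0 := congr1 (fun M : 'M[R]_(1, 2) => M 0 0) vx.
  have vx1 := congr1 (fun M : 'M[R]_(1, 2) => M 0 1) vx.
  rewrite mulmx2E !sformE mxE in vx0; rewrite mulmx2E !sformE mxE in vx1.
  set v0 := v 0 0 in vx0 vx1; set v1 := v 0 1 in vx0 vx1.
  have v_gt0 : 0 < v0 ^+ 2 + v1 ^+ 2.
    rewrite lt_def paddr_eq0 ?sqr_ge0 // !sqrf_eq0 addr_ge0 ?sqr_ge0 // andbT.
    apply: contra v_neq0 => /andP[/eqP v00 /eqP v01]; apply/eqP/rowP => j.
    by rewrite mxE; case: (ord2P j) => ->.
  (* x |v|^2 = v M v^T = a (v.(c,s))^2 + b (v.(-s,c))^2 and |v|^2 = (v.(c,s))^2 + (v.(-s,c))^2 *)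
  have key : (a - x) * (v0 ^+ 2 + v1 ^+ 2) = (a - b) * (- s * v0 + c * v1) ^+ 2.
    have -> : (a - x) * (v0 ^+ 2 + v1 ^+ 2) =
        a * (v0 ^+ 2 + v1 ^+ 2) - (v0 * (x * v0) + v1 * (x * v1)) by ring.
    by rewrite -vx0 -vx1; apply: (eq_lincomb (- a * (v0 ^+ 2 + v1 ^+ 2)) cs1); ring.
  rewrite -subr_ge0 -(pmulr_lge0 _ v_gt0) key.
  by rewrite mulr_ge0 ?subr_ge0 ?sqr_ge0.
apply/le_anti/andP; split.
  by apply: ge_sup; [exists a | move=> x /le_a].
by apply: ub_le_sup => //; exists a => x /le_a.
Qed.

Lemma logm_sform (E : 'M[R]_2) : E 0 1 = E 1 0 ->
    (forall w0 w1, w0 ^+ 2 + w1 ^+ 2 = 1 -> 0 < qform E w0 w1) ->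
  exists a b c s, [/\ c ^+ 2 + s ^+ 2 = 1, b <= a,
    logm E = sform a b c s & E = sform (expR a) (expR b) c s].
Proof.
move=> symE posE; have [A [B [c [s [cs1 _ EE]]]]] := sym2_sform symE.
have A_gt0 : 0 < A by rewrite -(qform_sform_eigvec1 cs1 A B) -EE posE.
have B_gt0 : 0 < B.
  by rewrite -(qform_sform_eigvec2 cs1 A B) -EE posE // sqrrN addrC.
have logE : exists L : 'M[R]_2, L^T = L /\ expm L = E.
  by exists (sform (ln A) (ln B) c s); rewrite trmx_sform expm_sform // !lnK.
have [symL expL] := xgetPex 0 logE; rewrite -/(logm E) in symL expL.
have symL10 : logm E 0 1 = logm E 1 0.
  by have := congr1 (fun M : 'M[R]_2 => M 1 0) symL; rewrite mxE.
have [a [b [c' [s' [cs1' ba LE]]]]] := sym2_sform symL10.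
by exists a, b, c', s'; split => //; rewrite -[LHS]expL LE expm_sform.
Qed.

End RealSpectralForm.

Section LargestEigenvalue.
Variables (R : realType) (n : nat) (lam mu phi : 'I_n.+1 -> R) (X : 'I_n.+1 -> 'M[R]_2).
Variable lsub : R.
Hypothesis X_spec2 : forall i, X i = spec2 (lam i) (mu i) (phi i).
Hypothesis u1_e1 : uvec (phi ord0) = e1 R.
Hypothesis lsub_lt : lsub < lam ord0.
Hypothesis mu_le_lsub : forall i, mu i <= lsub.
Hypothesis lam_le_lsub : forall i, i != ord0 -> lam i <= lsub.

Local Notation l1 := (lam ord0).
Local Notation ex m x := (expR (m%:R * x)).

Let summand m i := sform (ex m (lam i)) (ex m (mu i)) (cos (phi i)) (sin (phi i)).

Lemma Em_sum m : Em X m = \sum_i summand m i.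
Proof.
apply: eq_bigr => i _.
by rewrite X_spec2 spec2_sform scale_sform expm_sform // cos2Dsin2.
Qed.

Lemma summand0 m : summand m ord0 = sform (ex m l1) (ex m (mu ord0)) 1 0.
Proof.
have cos1 : cos (phi ord0) = 1 by have := congr1 (fun v : 'cV[R]_2 => v 0 0) u1_e1; rewrite !mxE.
have sin1 : sin (phi ord0) = 0 by have := congr1 (fun v : 'cV[R]_2 => v 1 0) u1_e1; rewrite !mxE.
by rewrite /summand cos1 sin1.
Qed.

Lemma ex_le m (x y : R) : x <= y -> ex m x <= ex m y.
Proof. by move=> xy; rewrite ler_expR ler_wpM2l. Qed.

(* the [n] summands [i != 0] have entries at most [2 e^(m lsub)]; also [e^(m mu_1) <= e^(m lsub)] *)
Let K : R := 2 * n%:R + 1.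

Lemma K_gt0 : 0 < K.
Proof. by rewrite ltr_pwDr ?mulr_ge0. Qed.

Lemma Em_entry m j k : Em X m j k =
  sform (ex m l1) (ex m (mu ord0)) 1 0 j k + \sum_(i < n) summand m (lift ord0 i) j k.
Proof. by rewrite Em_sum summxE big_ord_recl /= summand0. Qed.

Lemma Em_rest_norm_le m j k :
  `|\sum_(i < n) summand m (lift ord0 i) j k| <= 2 * n%:R * ex m lsub.
Proof.
apply: le_trans (ler_norm_sum _ _ _) _.
apply: le_trans (_ : \sum_(i < n) ex m lsub *+ 2 <= _); last first.
  by rewrite sumr_const card_ord -mulrnA -natrM [(2 * n)%N%:R * _]mulr_natl.
apply: ler_sum => i _.
apply: le_trans (sform_norm_le _ _ (cos2Dsin2 _) (ltW (expR_gt0 _)) (ltW (expR_gt0 _))) _.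
by rewrite mulr2n lerD ?ex_le ?lam_le_lsub // eq_sym neq_lift.
Qed.

Lemma Em_entries_le m : [/\ Em X m 0 0 <= ex m l1 + K * ex m lsub,
  Em X m 1 1 <= K * ex m lsub & `|Em X m 1 0| <= K * ex m lsub].
Proof.
have := ex_le m (mu_le_lsub ord0); have G0 : 0 <= ex m lsub := ltW (expR_gt0 _).
move: (Em_rest_norm_le m 0 0) (Em_rest_norm_le m 1 1) (Em_rest_norm_le m 1 0).
rewrite !Em_entry !sformE expr1n expr0n /= !(mulr1, mulr0, mul1r, addr0, add0r) /K.
rewrite !ler_norml => /andP[_ r00] /andP[_ r11] /andP[r10 r10'] eG.
by split; [lra | lra | apply/andP; split; lra].
Qed.

Lemma qform_Em_ge m w0 w1 :
  ex m l1 * w0 ^+ 2 + ex m (mu ord0) * w1 ^+ 2 <= qform (Em X m) w0 w1.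
Proof.
rewrite Em_sum qform_sum big_ord_recl /= summand0 qform_sform.
rewrite !(mul1r, mul0r, oppr0, addr0, add0r) lerDl sumr_ge0 // => i _.
exact: qform_sform_ge0 (ltW (expR_gt0 _)) (ltW (expR_gt0 _)).
Qed.

Lemma mu1_lt_l1 : mu ord0 < l1.
Proof. exact: le_lt_trans (mu_le_lsub ord0) lsub_lt. Qed.

Lemma qform_Em_ge_mu m w0 w1 : w0 ^+ 2 + w1 ^+ 2 = 1 ->
  ex m (mu ord0) <= qform (Em X m) w0 w1.
Proof.
move=> w01; apply: le_trans (qform_Em_ge m w0 w1).
have eT : ex m (mu ord0) <= ex m l1 by exact/ex_le/ltW/mu1_lt_l1.
rewrite -subr_ge0 in eT; have := mulr_ge0 eT (sqr_ge0 w0).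
by rewrite (_ : w1 ^+ 2 = 1 - w0 ^+ 2); lra.
Qed.

Lemma Em00_ge m : ex m l1 <= Em X m 0 0.
Proof. by have := qform_Em_ge m 1 0; rewrite qform10 expr1n expr0n !mulr1 mulr0 addr0. Qed.

Lemma Em_sym m : Em X m 0 1 = Em X m 1 0.
Proof. by rewrite Em_sum !summxE; apply: eq_bigr => i _; rewrite sform01 sform10. Qed.

Lemma logm_Em m : exists a b c s, [/\ c ^+ 2 + s ^+ 2 = 1, b <= a,
  logm (Em X m) = sform a b c s & Em X m = sform (expR a) (expR b) c s].
Proof.
apply: logm_sform (Em_sym m) _ => w0 w1 w01.
exact: lt_le_trans (expR_gt0 _) (qform_Em_ge_mu m w01).
Qed.

Lemma Em_eigenvalue_bounds m a b c s : c ^+ 2 + s ^+ 2 = 1 -> b <= a ->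
    Em X m = sform (expR a) (expR b) c s ->
  [/\ m%:R * l1 <= a, a <= m%:R * l1 + ln (1 + 2 * K) & m%:R * mu ord0 <= b].
Proof.
move=> cs1 ba EE; have [E00 E11 _] := Em_entries_le m.
have BA : expR b <= expR a by rewrite ler_expR.
have GT : ex m lsub <= ex m l1 by rewrite ex_le ?ltW.
split.
- rewrite -(ler_expR (m%:R * l1)); apply: le_trans (Em00_ge m) _.
  rewrite EE sform00 -[X in _ <= X]mulr1 -cs1 mulrDr lerD2l.
  by rewrite ler_wpM2r ?sqr_ge0.
- rewrite -(ler_expR a) expRD lnK ?posrE ?addr_gt0 ?mulr_gt0 ?ltr01 ?K_gt0 //.
  have := sform_trace cs1 (expR a) (expR b); rewrite -EE.
  have := ler_wpM2l (ltW K_gt0) GT; have := expR_gt0 b; lra.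
- rewrite -(ler_expR (m%:R * mu ord0)) -(qform_sform_eigvec2 cs1 (expR a) (expR b)) -EE.
  by apply: qform_Em_ge_mu; rewrite sqrrN addrC.
Qed.

Let ratio m := ex m (lsub - l1).

Lemma ex_lsub m : ex m lsub = ratio m * ex m l1.
Proof. by rewrite /ratio -expRD -mulrDr subrK. Qed.

Lemma Em_eigenvector_bounds m a b c s : c ^+ 2 + s ^+ 2 = 1 -> b <= a ->
    Em X m = sform (expR a) (expR b) c s -> 2 * K * ratio m <= 1 ->
  s ^+ 2 <= 2 * K * ratio m /\ `|c * s| <= 2 * K * ratio m.
Proof.
move=> cs1 ba EE small; have [_ E11 E10] := Em_entries_le m.
have T0 := expR_gt0 (m%:R * l1); have B0 := expR_gt0 b.
have E00 := Em00_ge m; rewrite ex_lsub in E11 E10.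
have D0 : 0 <= expR a - expR b by rewrite subr_ge0 ler_expR.
have c2 : c ^+ 2 = 1 - s ^+ 2 by lra.
have gap : ex m l1 / 2 <= expR a - expR b.
  move: E00 E11; rewrite EE !sformE c2.
  have := mulr_ge0 D0 (sqr_ge0 s); have := ler_wpM2r (ltW T0) small; lra.
have bound x : 0 <= x -> (expR a - expR b) * x <= K * (ratio m * ex m l1) ->
    x <= 2 * K * ratio m.
  by move=> x0; move: gap; rewrite -subr_ge0 => /mulr_ge0 /(_ x0); nra.
split; apply: bound; rewrite ?sqr_ge0 ?normr_ge0 //.
  by move: E11; rewrite EE sform11 c2; lra.
by rewrite -(ger0_norm D0) -normrM -sform10 -EE.
Qed.

Let C : R := ln (1 + 2 * K).

Lemma C_ge0 : 0 <= C.
Proof. by rewrite ln_ge0 // lerDl mulr_ge0 // ltW // K_gt0. Qed.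

Let upper m := l1 + C / m%:R.

Local Notation L m := (m%:R^-1 *: logm (Em X m)).

Lemma logm_scaled m : (0 < m)%N -> exists a b c s, [/\ c ^+ 2 + s ^+ 2 = 1,
  L m = sform a b c s, l1 <= a <= upper m,
  mu ord0 <= b <= a &
  (2 * K * ratio m <= 1 -> s ^+ 2 <= 2 * K * ratio m /\ `|c * s| <= 2 * K * ratio m)].
Proof.
move=> m_gt0; have m_pos : (0 : R) < m%:R by rewrite ltr0n.
have [a [b [c [s [cs1 ba LE EE]]]]] := logm_Em m.
have [la ua lb] := Em_eigenvalue_bounds cs1 ba EE.
exists (m%:R^-1 * a), (m%:R^-1 * b), c, s; split => //.
- by rewrite LE scale_sform.
- rewrite ler_pdivlMl // la /= ler_pdivrMl // /upper.
  by rewrite mulrDr mulrCA mulfV ?gt_eqF // mulr1.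
- by rewrite ler_pdivlMl // lb /= ler_wpM2l // invr_ge0 ltW.
- exact: Em_eigenvector_bounds cs1 ba EE.
Qed.

Lemma lmax_logm_bounds m : (0 < m)%N -> l1 <= lmax (L m) <= upper m.
Proof.
move=> m_gt0; have [a [b [c [s [cs1 -> la /andP[_ ba] _]]]]] := logm_scaled m_gt0.
by rewrite lmax_sform.
Qed.

Let gapB : R := l1 + C - mu ord0.
Let err m := gapB * (2 * K * ratio m).

Lemma logm_entries_bounds m : (0 < m)%N -> 2 * K * ratio m <= 1 ->
  [/\ l1 - err m <= L m 0 0, L m 0 0 <= upper m & `|L m 1 0| <= err m].
Proof.
move=> m_gt0 small.
have [a [b [c [s [cs1 -> /andP[la ua] /andP[lb ba] /(_ small) [s2 cs]]]]]] := logm_scaled m_gt0.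
rewrite /upper /err in ua *.
have Cm : C / m%:R <= C by rewrite ler_pdivrMr ?ltr0n // ler_peMr ?C_ge0 // ler1n.
have ab : a - b <= gapB by rewrite /gapB; lra.
have ab0 : 0 <= a - b by rewrite subr_ge0.
rewrite !sformE (_ : c ^+ 2 = 1 - s ^+ 2); last by lra.
have := ler_pM ab0 (sqr_ge0 s) ab s2; have := mulr_ge0 ab0 (sqr_ge0 s).
split; [lra | lra |].
by rewrite normrM ger0_norm // ler_pM.
Qed.

Local Open Scope classical_set_scope.

Lemma cvg_invn : (fun m : nat => (m%:R : R)^-1) @ \oo --> 0.
Proof. by rewrite -(cvg_shiftS (fun m : nat => (m%:R : R)^-1)); exact: cvg_harmonic. Qed.

Lemma ratio_cvg0 : ratio @ \oo --> 0.
Proof.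
rewrite (_ : ratio = GRing.exp (expR (lsub - l1))); last first.
  by apply/funext => m; rewrite /ratio expRM_natl.
by apply: cvg_expr; rewrite gtr0_norm ?expR_gt0 // expR_lt1 subr_lt0.
Qed.

Lemma ratio_small : \forall m \near \oo, 2 * K * ratio m <= 1.
Proof.
have K2_gt0 : 0 < 2 * K by rewrite mulr_gt0 ?K_gt0.
near=> m; rewrite mulrC -ler_pdivlMr // mul1r.
by near: m; apply: (cvgr_le _ ratio_cvg0); rewrite invr_gt0.
Unshelve. all: by end_near.
Qed.

Lemma upper_cvg : upper @ \oo --> l1.
Proof.
rewrite -[X in _ --> X]addr0 -(mulr0 C).
by apply: cvgD; [exact: cvg_cst | exact: cvgMl_tmp cvg_invn].
Qed.

Lemma err_cvg0 : err @ \oo --> 0.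
Proof.
rewrite -(mulr0 gapB) -(mulr0 (2 * K)).
by apply: cvgMl_tmp; apply: cvgMl_tmp; exact: ratio_cvg0.
Qed.

Lemma lmax_logm_cvg : (fun m : nat => lmax (L m)) @ \oo --> l1.
Proof.
apply: (squeeze_cvgr _ (cvg_cst l1) upper_cvg).
by near=> m; apply: lmax_logm_bounds; near: m; exact: nbhs_infty_gt.
Unshelve. all: by end_near.
Qed.

Lemma logm_entries_near : \forall m \near \oo,
  [/\ l1 - err m <= L m 0 0, L m 0 0 <= upper m & `|L m 1 0| <= err m].
Proof.
near=> m; apply: logm_entries_bounds; near: m; [exact: nbhs_infty_gt | exact: ratio_small].
Unshelve. all: by end_near.
Qed.

Lemma logm_entry00_cvg : (fun m : nat => L m 0 0) @ \oo --> l1.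
Proof.
apply: (@squeeze_cvgr _ _ _ _ (fun m => l1 - err m) upper).
- by apply: filterS logm_entries_near => m [lo up _]; rewrite lo up.
- by rewrite -[X in _ --> X]subr0; apply: cvgB; [exact: cvg_cst | exact: err_cvg0].
- exact: upper_cvg.
Qed.

Lemma logm_entry10_cvg : (fun m : nat => L m 1 0) @ \oo --> 0.
Proof.
apply: (@squeeze_cvgr _ _ _ _ (fun m => - err m) err).
- by apply: filterS logm_entries_near => m [_ _]; rewrite ler_norml.
- by rewrite -oppr0; apply: cvgN; exact: err_cvg0.
- exact: err_cvg0.
Qed.

Lemma logm_limit_eigvec (S : 'M[R]_2) :
    (forall i j, (fun m : nat => L m i j) @ \oo --> S i j) ->
  S *m e1 R = l1 *: e1 R.
Proof.
move=> LS.
have S00 : S 0 0 = l1 := cvg_unique _ (LS 0 0) logm_entry00_cvg.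
have S10 : S 1 0 = 0 := cvg_unique _ (LS 1 0) logm_entry10_cvg.
apply/matrixP => i j; rewrite (ord1 j) mulmx2E !mxE /=.
by case: (ord2P i) => ->; rewrite ?S00 ?S10 /= ?mulr1 ?mulr0 ?addr0.
Qed.

End LargestEigenvalue.

(* The multiset X_1,...,X_n is indexed by 'I_n.+1; X_1 is the index ord0. *)
Theorem lemma2 (R : realType) (n : nat) (lam mu phi : 'I_n.+1 -> R)
    (X : 'I_n.+1 -> 'M[R]_2)
    (hX : forall i, X i = spec2 (lam i) (mu i) (phi i))
    (hlm : forall i, mu i <= lam i)
    (hphi : forall i, - (pi / 2) <= phi i <= pi / 2)
    (huniq_lam : forall i, i != ord0 -> lam i < lam ord0)
    (huniq_mu : forall i, mu i < lam ord0)
    (hu1 : uvec (phi ord0) = e1 R)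
    (hv1 : vvec (phi ord0) = e2 R) :
  ((fun m : nat => lmax ((m%:R)^-1 *: logm (Em X m))) @ \oo --> lam ord0)%classic
  /\ (forall S : 'M[R]_2,
        (forall i j, ((fun m : nat => ((m%:R)^-1 *: logm (Em X m)) i j) @ \oo
                        --> S i j)%classic) ->
        S *m e1 R = lam ord0 *: e1 R).
Proof.
pose lsub := Num.max (\big[Num.max/mu ord0]_i mu i)
                     (\big[Num.max/mu ord0]_(i | i != ord0) lam i).
have lsub_lt : lsub < lam ord0 by rewrite gt_max !bigmax_lt ?huniq_mu.
have mu_le i : mu i <= lsub by rewrite le_max le_bigmax.
have lam_le i : i != ord0 -> lam i <= lsub by move=> i0; rewrite le_max le_bigmax_cond ?orbT.
split; first exact: lmax_logm_cvg hX hu1 lsub_lt mu_le lam_le.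
exact: logm_limit_eigvec hX hu1 lsub_lt mu_le lam_le.
Qed.
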